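(* Let $S=K[t_1,\ldots,t_s]$ over a field $K$ with $s\geq2$, let $d_1\leq\cdots\leq d_s$ be positive integers with $d_1\geq2$, and let $L$ be the ideal generated by all $t_it_j^{d_j}$ with $1\leq i<j\leq s$. Let $t^a=t_r^{a_r}\cdots t_s^{a_s}$ be a monomial not in $L$ (a standard monomial of $S/L$ with respect to any monomial order), where $1\leq r\leq s$, $a_r\geq1$ and $a_i=0$ for $i<r$. Then $0\leq a_i\leq d_i-1$ for $i>r$ and $$\deg(S/(L,t^a))=\begin{cases}\deg(S/L)-\sum_{i=2}^{s}(d_i-a_i)\cdots(d_s-a_s)-1 & \text{if } r=s,\ a_s\leq d_s,\\ \deg(S/L)-1 & \text{if } r=s,\ a_s\geq d_s+1,\\ \deg(S/L)-\sum_{i=2}^{r+1}(d_i-a_i)\cdots(d_s-a_s) & \text{if } r<s,\ a_r\leq d_r,\\ \deg(S/L)-(d_{r+1}-a_{r+1})\cdots(d_s-a_s) & \text{if } r<s,\ a_r\geq d_r+1.\end{cases}$$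
   Context: For a graded ideal $J$ with Hilbert function $H_J(d)=\dim_K(S_d/J_d)$ and $k=\dim(S/J)$, $\deg(S/J)=(k-1)!\lim_{d\to\infty}H_J(d)/d^{k-1}$ if $k\geq1$ and $\dim_K(S/J)$ if $k=0$. In the formulas $a_i=0$ for $i<r$. *)

From HB Require Import structures.
From mathcomp Require Import all_boot all_order all_algebra.
From mathcomp Require Import mpoly.
Set Implicit Arguments. Unset Strict Implicit. Unset Printing Implicit Defensive.
Import Order.TTheory GRing.Theory Num.Theory.
Local Open Scope ring_scope.

Section Defs.
Variables (K : fieldType) (n : nat).
Local Notation S := {mpoly K[n]}.

Definition ideal_gen (G : S -> Prop) : S -> Prop :=
  fun p => exists (m : nat) (g q : 'I_m -> S),
    (forall i, G (g i)) /\ p = \sum_(i < m) q i * g i.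

(* homogeneous of (standard) degree d; 0 is homogeneous of every degree *)
Definition is_homog (d : nat) (p : S) : Prop :=
  forall mm, mm \in msupp p -> mdeg mm = d.

(* H_J(d) = dim_K (S_d / J_d) = h : the classes of h homogeneous polynomials
   of degree d form a K-basis of S_d / J_d  (J_d = J ∩ S_d). *)
Definition hilbert_value (J : S -> Prop) (d h : nat) : Prop :=
  exists b : 'I_h -> S,
    (forall i, is_homog d (b i)) /\
    (forall f, is_homog d f -> exists c : 'I_h -> K, J (f - \sum_(i < h) c i *: b i)) /\
    (forall c : 'I_h -> K, J (\sum_(i < h) c i *: b i) -> forall i, c i = 0).

Definition quotient_dim (J : S -> Prop) (h : nat) : Prop :=
  exists b : 'I_h -> S,
    (forall f, exists c : 'I_h -> K, J (f - \sum_(i < h) c i *: b i)) /\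
    (forall c : 'I_h -> K, J (\sum_(i < h) c i *: b i) -> forall i, c i = 0).

Definition is_ideal (P : S -> Prop) : Prop :=
  P 0 /\ (forall x y, P x -> P y -> P (x + y)) /\ (forall r x, P x -> P (r * x)).

Definition is_prime_ideal (P : S -> Prop) : Prop :=
  is_ideal P /\ ~ P 1 /\ (forall x y, P (x * y) -> P x \/ P y).

(* a strictly increasing chain P_0 ⊊ P_1 ⊊ ... ⊊ P_k of prime ideals of S
   containing J, i.e. a chain of primes of length k in S/J *)
Definition prime_chain (J : S -> Prop) (k : nat) : Prop :=
  exists P : nat -> (S -> Prop),
    (forall i, (i <= k)%N -> is_prime_ideal (P i) /\ (forall x, J x -> P i x)) /\
    (forall i, (i < k)%N ->
       (forall x, P i x -> P i.+1 x) /\ exists x, P i.+1 x /\ ~ P i x).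

Definition krull_dim (J : S -> Prop) (k : nat) : Prop :=
  prime_chain J k /\ forall k', prime_chain J k' -> (k' <= k)%N.

Definition converges (u : nat -> rat) (l : rat) : Prop :=
  forall eps : rat, 0 < eps -> exists D : nat, forall d, (D <= d)%N -> `|u d - l| < eps.

(* deg(S/J) = e, where k = dim(S/J):
   e = (k-1)! lim_{d->oo} H_J(d)/d^(k-1) if k >= 1, and e = dim_K(S/J) if k = 0 *)
Definition is_degree (J : S -> Prop) (e : rat) : Prop :=
  exists (k : nat) (H : nat -> nat),
    krull_dim J k /\ (forall d, hilbert_value J d (H d)) /\
    (if k is k'.+1 then
       converges (fun d => (H d)%:R / (d%:R ^+ k')) (e / (k'`!)%:R)
     else exists h, quotient_dim J h /\ e = h%:R).

End Defs.

(* the monomial t^a = t_1^{a_1} ... t_s^{a_s}; variables t_1..t_s are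
   'X_0 .. 'X_(s-1), exponents a : nat -> nat are 1-based *)
Definition monoA (K : fieldType) (s : nat) (a : nat -> nat) : {mpoly K[s]} :=
  'X_[[multinom a i.+1 | i < s]].

Definition Lgens (K : fieldType) (s : nat) (d : nat -> nat) : {mpoly K[s]} -> Prop :=
  fun g => exists i j : 'I_s, (i < j)%N /\ g = 'X_i * 'X_j ^+ d (j.+1).

Definition tailprod (s : nat) (d a : nat -> nat) (i : nat) : rat :=
  \prod_(i <= j < s.+1) ((d j)%:R - (a j)%:R).
Arguments monoA : clear implicits.
Arguments Lgens : clear implicits.

From HB Require Import structures.
From mathcomp Require Import all_boot all_order all_algebra.
From mathcomp Require Import mpoly.
From mathcomp Require Import zify.
From Stdlib Require Import Classical.
Import Order.TTheory GRing.Theory Num.Theory.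
Set Implicit Arguments. Unset Strict Implicit.

(* [L] and [(L, t^a)] are monomial ideals, so the Hilbert function of each
   quotient counts standard monomials degree by degree.  Every prime containing
   [L] contains all variables but one, so both quotients have dimension 1 and
   their degrees are the eventual values of these counts.  In large degree a
   standard monomial whose first nonzero exponent sits at [t_k] is determined
   by its exponents [e_j < d_j], [j > k], so the counts become constant.  The
   monomials removed by adding [t^a] are the standard ones divisible by [t^a]:
   for each [k <= r] there are [(d_(k+1) - a_(k+1)) ... (d_s - a_s)] of them
   (none for [k < r] when [a_r > d_r]), and summing these tail products gives
   the formula. *)

Local Open Scope ring_scope.

Section IdealGen.
Variables (K : fieldType) (n : nat) (G : {mpoly K[n]} -> Prop).

Lemma ideal_gen0 : ideal_gen G 0.
Proof. by exists 0%N, (fun _ => 0), (fun _ => 0); split; [case | rewrite big_ord0]. Qed.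

Lemma ideal_genD x y : ideal_gen G x -> ideal_gen G y -> ideal_gen G (x + y).
Proof.
move=> [m1 [g1 [q1 [G1 ->]]]] [m2 [g2 [q2 [G2 ->]]]].
pose glue T (u : 'I_m1 -> T) (v : 'I_m2 -> T) i :=
  match split i with inl j => u j | inr j => v j end.
exists (m1 + m2)%N, (glue _ g1 g2), (glue _ q1 q2); split.
  by move=> i; rewrite /glue; case: (split i).
rewrite big_split_ord /glue /=; congr (_ + _); apply: eq_bigr => i _.
  by rewrite -[lshift _ _]/(unsplit (inl i)) unsplitK.
by rewrite -[rshift _ _]/(unsplit (inr i)) unsplitK.
Qed.

Lemma ideal_genMl p x : ideal_gen G x -> ideal_gen G (p * x).
Proof.
move=> [m [g [q [Gg ->]]]]; exists m, g, (fun i => p * q i); split => //.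
by rewrite mulr_sumr; apply: eq_bigr => i _; rewrite mulrA.
Qed.

Lemma ideal_gen_sum (I : Type) (r : seq I) (F : I -> {mpoly K[n]}) :
  (forall i, ideal_gen G (F i)) -> ideal_gen G (\sum_(i <- r) F i).
Proof.
move=> GF; elim: r => [|x r IH]; first by rewrite big_nil; apply: ideal_gen0.
by rewrite big_cons; apply: ideal_genD.
Qed.

Lemma mem_ideal_gen g : G g -> ideal_gen G g.
Proof. by move=> Gg; exists 1%N, (fun _ => g), (fun _ => 1); rewrite big_ord1 mul1r. Qed.

Lemma ideal_gen_sub (G' : {mpoly K[n]} -> Prop) p :
  (forall g, G g -> G' g) -> ideal_gen G p -> ideal_gen G' p.
Proof. by move=> GG' [m [g [q [Gg ->]]]]; exists m, g, q; split => // i; apply: GG'. Qed.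

Variable red : pred 'X_{1..n}.
Hypothesis gen_monomial : forall g, G g -> exists m, g = 'X_[m] /\ red m.
Hypothesis red_up : forall m m', red m -> (m <= m')%MM -> red m'.
Hypothesis red_gen : forall m, red m -> ideal_gen G 'X_[m].

Lemma ideal_gen_monomialP p : ideal_gen G p <-> {in msupp p, forall m, red m}.
Proof.
split=> [[k [g [q [Gg ->]]]]|redp].
  apply: (big_ind (fun p : {mpoly K[n]} => {in msupp p, forall m, red m})).
  - by move=> m; rewrite mcoeff_msupp mcoeff0 eqxx.
  - by move=> x y redx redy m /msuppD_le; rewrite mem_cat => /orP [/redx|/redy].
  move=> i _ m /msuppM_le /allpairsP [[m1 m2] [_ /=]].
  have [mg [-> redmg]] := gen_monomial (Gg i).
  rewrite msuppX mem_seq1 => /eqP -> ->.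
  exact: red_up redmg (lem_addl _ _).
rewrite (mpolyE p); apply: ideal_gen_sum => m.
have [mp|mNp] := boolP (m \in msupp p).
  by rewrite -mul_mpolyC; apply/ideal_genMl/red_gen/redp.
by rewrite (memN_msupp_eq0 mNp) scale0r; apply: ideal_gen0.
Qed.

End IdealGen.

Section ExponentVectors.
Variable n : nat.

(* Exponent vectors of total degree [d] have entries at most [d], so they are
   encoded by finite functions into ['I_d.+1]. *)
Definition mnm_of_ffun d (f : {ffun 'I_n -> 'I_d.+1}) : 'X_{1..n} :=
  [multinom (f i : nat) | i < n].

Definition ffun_of_mnm d (m : 'X_{1..n}) : {ffun 'I_n -> 'I_d.+1} :=
  [ffun i => inord (m i)].

Lemma mnm_of_ffun_inj d : injective (@mnm_of_ffun d).
Proof.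
by move=> f g /mnmP fg; apply/ffunP => i; apply: val_inj; have := fg i; rewrite !mnmE.
Qed.

Definition fdeg d (f : {ffun 'I_n -> 'I_d.+1}) := (\sum_i (f i : nat))%N.

Lemma mdeg_mnm_of_ffun d f : mdeg (@mnm_of_ffun d f) = fdeg f.
Proof. by rewrite mdegE; apply: eq_bigr => i _; rewrite mnmE. Qed.

Lemma ffun_of_mnmK d m : mdeg m = d -> mnm_of_ffun (ffun_of_mnm d m) = m.
Proof.
move=> degm; apply/mnmP => i; rewrite mnmE ffunE inordK // ltnS -degm mdegE.
by rewrite (bigD1 i) //= leq_addr.
Qed.

Definition standard_exps (red : pred 'X_{1..n}) d :=
  [pred f : {ffun 'I_n -> 'I_d.+1} | (fdeg f == d) && ~~ red (mnm_of_ffun f)].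

End ExponentVectors.

Section HilbertFunction.
Variables (K : fieldType) (n : nat).
Local Notation S := {mpoly K[n]}.

Lemma mcoeff_sum_monomials h (c : 'I_h -> K) (b : 'I_h -> 'X_{1..n}) m :
  (\sum_(i < h) c i *: 'X_[b i] : S)@_m = \sum_(i < h) c i * (b i == m)%:R.
Proof.
by rewrite (raddf_sum (mcoeff m)); apply: eq_bigr => i _; rewrite -mcoeffX; apply: mcoeffZ.
Qed.

Variables (J : S -> Prop) (red : pred 'X_{1..n}).
Hypothesis memJ : forall p, J p <-> {in msupp p, forall m, red m}.

Lemma hilbert_value_standard d : hilbert_value J d #|standard_exps red d|.
Proof.
set A := standard_exps red d.
pose b i := mnm_of_ffun (enum_val (A := A) i).
have degb i : mdeg (b i) = d.
  by have := enum_valP i; rewrite inE mdeg_mnm_of_ffun => /andP [/eqP].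
have redNb i : ~~ red (b i) by have := enum_valP i; rewrite inE => /andP [].
have b_inj : injective b by move=> i j /mnm_of_ffun_inj /enum_val_inj.
exists (fun i => 'X_[b i]); split; [|split].
- by move=> i m; rewrite msuppX mem_seq1 => /eqP ->.
- move=> f homf; exists (fun i => f@_(b i)); apply/memJ => m; apply: contraTT => redNm.
  rewrite mcoeff_msupp negbK mcoeffB mcoeff_sum_monomials subr_eq0; apply/eqP.
  have [degm|degNm] := eqVneq (mdeg m) d.
    have gA : ffun_of_mnm d m \in A.
      by rewrite inE -mdeg_mnm_of_ffun ffun_of_mnmK // degm /= eqxx.
    set i0 := enum_rank_in gA (ffun_of_mnm d m).
    have bg : b i0 = m by rewrite /b enum_rankK_in // ffun_of_mnmK.
    rewrite (bigD1 i0) //= bg eqxx mulr1 big1 ?addr0 // => i ig.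
    by rewrite -bg (inj_eq b_inj) (negbTE ig) mulr0.
  have bNm i : (b i == m) = false by apply: contraNF degNm => /eqP <-; rewrite degb.
  rewrite big1 => [|i _]; last by rewrite bNm mulr0.
  by apply/eqP; rewrite mcoeff_eq0; apply: contra degNm => /homf ->.
- move=> c /memJ cJ i; apply/eqP; apply: contraNT (redNb i) => ci; apply: cJ.
  rewrite mcoeff_msupp mcoeff_sum_monomials (bigD1 i) //= eqxx mulr1 big1 ?addr0 //.
  by move=> j ji; rewrite (inj_eq b_inj) (negbTE ji) mulr0.
Qed.

End HilbertFunction.

Section UnivariatePrimes.
Variable K : fieldType.

Lemma poly_prime_maximal (I1 I2 : {poly K} -> Prop) p :
  (forall x y, I1 (x * y) -> I1 x \/ I1 y) ->
  (forall r x, I1 x -> I1 (r * x)) ->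
  (forall x y, I2 x -> I2 y -> I2 (x + y)) ->
  (forall r x, I2 x -> I2 (r * x)) ->
  ~ I2 1 -> (forall x, I1 x -> I2 x) ->
  I1 p -> p != 0 -> forall q, I2 q -> I1 q.
Proof.
move=> I1_prime I1M I2D I2M I2N1 I12 I1p p0 q I2q; apply: NNPP => I1Nq.
move: I1p p0; elim: {p}(size p) {-2}p (leqnn (size p)) => [|N IH] p sizep I1p p0.
  by move: sizep; rewrite leqn0 size_poly_eq0 (negbTE p0).
have [u Bezout] := Bezoutp p q; set g := gcdp p q in Bezout.
have g0 : g != 0 by rewrite gcdp_eq0 negb_and p0.
have I2g : I2 g.
  move/eqpP: Bezout => [[c1 c2] /andP [c10 c20] /= e].
  have -> : g = (c2^-1 * c1)%:P * (u.1 * p + u.2 * q).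
    rewrite polyCM -mulrA [c1%:P * _]mul_polyC e -[c2 *: g]mul_polyC mulrA.
    by rewrite -polyCM mulVf // mul1r.
  by apply/I2M/I2D; [apply/I2M/I12 | apply: I2M].
have /divpK pg := dvdp_gcdl p q; have /divpK qg := dvdp_gcdr p q.
have [I1pg|I1g] : I1 (p %/ g) \/ I1 g by apply: I1_prime; rewrite pg.
  have pg0 : p %/ g != 0 by apply: contra p0 => /eqP pg0; rewrite -pg pg0 mul0r.
  have [lt|ge] := ltnP (size (p %/ g)) (size p).
    by apply: (IH (p %/ g)) => //; rewrite -ltnS (leq_trans lt).
  have /size_poly1P [c c0 gc] : size g == 1%N.
    have := size_mul pg0 g0; rewrite pg => sizep_eq.
    have g_gt0 : (0 < size g)%N by rewrite size_poly_gt0.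
    rewrite eqn_leq g_gt0 andbT; move: ge; rewrite sizep_eq.
    case: (size g) g_gt0 => // [[|k]] //= _.
    by rewrite addnS /= -[X in (_ <= X)%N]addn0 leq_add2l.
  apply: I2N1; have -> : 1 = c^-1%:P * g by rewrite gc -polyCM mulVf.
  exact: I2M.
by apply: I1Nq; rewrite -qg; apply: I1M.
Qed.

End UnivariatePrimes.

Section CollapseToOneVariable.
Variables (K : fieldType) (n : nat) (k : 'I_n).
Local Notation S := {mpoly K[n]}.

(* [embed] maps [X] to [t_k]; modulo the other variables it inverts [collapse]. *)
Definition collapse : {rmorphism S -> {poly K}} :=
  mmap polyC (fun i => if i == k then 'X else 0).

Lemma embed_comm : commr_rmorph (@mpolyC n K) 'X_k.
Proof. by move=> c; apply: mulrC. Qed.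

Definition embed : {rmorphism {poly K} -> S} := horner_morph embed_comm.

Lemma embedX : embed 'X = 'X_k.
Proof. exact: horner_morphX. Qed.

Lemma embedC c : embed c%:P = c%:MP.
Proof. exact: horner_morphC. Qed.

Lemma collapseX (m : 'X_{1..n}) :
  collapse 'X_[m] = \prod_(i < n) (if i == k then 'X else 0) ^+ m i.
Proof. exact: mmapX. Qed.

Lemma collapseXk : collapse 'X_k = 'X.
Proof.
rewrite collapseX (bigD1 k) //= eqxx mnm1E eqxx expr1 big1 ?mulr1 // => i ik.
by rewrite (negbTE ik) mnm1E eq_sym (negbTE ik) expr0.
Qed.

Lemma collapseX_eq0 (m : 'X_{1..n}) l : l != k -> (0 < m l)%N -> collapse 'X_[m] = 0.
Proof.
move=> lk ml; rewrite collapseX (bigD1 l) //= (negbTE lk) expr0n.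
by rewrite eqn0Ngt ml mul0r.
Qed.

Lemma collapse_ideal_gen (G : S -> Prop) p :
  (forall g, G g -> collapse g = 0) -> ideal_gen G p -> collapse p = 0.
Proof.
move=> Gcollapse [m [g [q [Gg ->]]]]; rewrite rmorph_sum big1 // => i _.
by rewrite rmorphM (Gcollapse _ (Gg i)) mulr0.
Qed.

Lemma sub_embed_collapse (Q : S -> Prop) :
  is_ideal Q -> (forall i, i != k -> Q 'X_i) ->
  forall p, Q (p - embed (collapse p)).
Proof.
move=> [Q0 [QD QM]] QX p.
have QS (I : Type) (r : seq I) F : (forall i, Q (F i)) -> Q (\sum_(i <- r) F i).
  by move=> QF; elim: r => [|x r IH]; rewrite ?big_nil ?big_cons //; apply: QD.
rewrite {1 2}(mpolyE p) (rmorph_sum collapse) (rmorph_sum embed) -sumrB.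
apply: QS => m.
rewrite -mul_mpolyC !rmorphM /= mmapC /= embedC -mulrBr; apply: (QM).
have [onlyk|] := boolP [forall i, (i != k) ==> (m i == 0%N)].
  suff -> : embed (collapse 'X_[m]) = 'X_[m] by rewrite subrr.
  rewrite collapseX rmorph_prod [RHS]mpolyXE_id; apply: eq_bigr => i _.
  rewrite rmorphXn; case: (eqVneq i k) => [->|ik]; first by rewrite embedX.
  by move/forallP: onlyk => /(_ i); rewrite ik => /eqP ->; rewrite !expr0.
rewrite negb_forall => /existsP [i]; rewrite negb_imply => /andP [ik mi].
rewrite (collapseX_eq0 ik) ?lt0n // rmorph0 subr0.
have -> : m = (U_(i) + (m - U_(i)))%MM.
  rewrite addmC submK //; apply/mnm_lepP => j.
  by rewrite mnm1E; case: eqP => // <-; rewrite lt0n.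
by rewrite mpolyXD mulrC; apply/QM/QX.
Qed.

Lemma ideal_embed_collapseP (Q : S -> Prop) :
  is_ideal Q -> (forall i, i != k -> Q 'X_i) ->
  forall x, Q x <-> Q (embed (collapse x)).
Proof.
move=> Q_ideal QX x; have [_ [QD QM]] := Q_ideal.
have Qdiff := sub_embed_collapse Q_ideal QX x.
split=> Qx; last by rewrite -(subrK (embed (collapse x)) x); apply: QD.
have -> : embed (collapse x) = x + (-1) * (x - embed (collapse x)).
  by rewrite mulN1r opprB addrC subrK.
by apply: QD => //; apply: QM.
Qed.

End CollapseToOneVariable.

Arguments collapse {K n} k.
Arguments embed {K n} k.

Section KrullDimensionOne.
Variables (K : fieldType) (n : nat).
Local Notation S := {mpoly K[n]}.

Lemma is_prime_ideal_kernel (R : idomainType) (f : {rmorphism S -> R}) :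
  is_prime_ideal (fun p => f p = 0).
Proof.
split; [split; [|split]|split] => /=.
- exact: rmorph0.
- by move=> x y fx fy; rewrite rmorphD fx fy addr0.
- by move=> r x fx; rewrite rmorphM fx mulr0.
- by rewrite rmorph1 => /eqP; rewrite oner_eq0.
- by move=> x y; rewrite rmorphM => /eqP; rewrite mulf_eq0 => /orP [] /eqP; [left|right].
Qed.

Lemma is_prime_ideal_expn (P : S -> Prop) x m : is_prime_ideal P -> P (x ^+ m) -> P x.
Proof.
move=> [_ [P1 P_prime]]; elim: m => [|m IH]; first by rewrite expr0.
by rewrite exprS => /P_prime [//|/IH].
Qed.

Variable D : 'I_n -> nat.

Lemma prime_var_or_var (P : S -> Prop) :
  is_prime_ideal P -> (forall i j : 'I_n, (i < j)%N -> P ('X_i * 'X_j ^+ D j)) ->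
  forall i j : 'I_n, i != j -> P 'X_i \/ P 'X_j.
Proof.
move=> P_prime PX; have [_ [_ P_mul]] := P_prime.
have ordered (i j : 'I_n) : (i < j)%N -> P 'X_i \/ P 'X_j.
  by move=> ij; case/P_mul: (PX _ _ ij) => [|/(is_prime_ideal_expn P_prime)]; [left|right].
move=> i j; rewrite neq_ltn => /orP [ij|ji]; first exact: ordered.
by case: (ordered _ _ ji); [right|left].
Qed.

Variables (J : S -> Prop) (k0 : 'I_n).
Hypothesis JX : forall i j : 'I_n, (i < j)%N -> J ('X_i * 'X_j ^+ D j).
Hypothesis J_collapse : forall p, J p -> collapse k0 p = 0.

(* The ideal of the variables other than [t_k0] inside the ideal of all variables. *)
Lemma prime_chain_one : prime_chain J 1.
Proof.
pose ev0 : {rmorphism S -> K} := horner_eval 0 \o collapse k0.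
exists (fun i p => if i is 0%N then collapse k0 p = 0 else ev0 p = 0); split.
  move=> [|[|i]] // _; split; try exact: is_prime_ideal_kernel.
    by move=> x /J_collapse.
  by move=> x /J_collapse /= ->; rewrite rmorph0.
move=> [|i] // _; split; first by move=> x /= ->; rewrite rmorph0.
exists 'X_k0; split=> [|/eqP]; last by rewrite collapseXk polyX_eq0.
by change ((collapse k0 ('X_k0 : S)).[0] = 0); rewrite collapseXk hornerX.
Qed.

Lemma prime_chain_le1 k' : prime_chain J k' -> (k' <= 1)%N.
Proof.
move=> [P [P_prime P_chain]]; rewrite leqNgt; apply/negP => lt1.
have [P0_prime J_P0] := P_prime 0%N isT.
have [P1_prime _] := P_prime 1%N (ltnW lt1).
have [P2_prime _] := P_prime 2%N lt1.
have [P01 [x1 [P1x1 P0Nx1]]] := P_chain 0%N (ltnW lt1).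
have [P12 [x2 [P2x2 P1Nx2]]] := P_chain 1%N lt1.
have [k P0X] : exists k, forall i, i != k -> P 0%N 'X_i.
  case: (classic (exists k, ~ P 0%N 'X_k)) => [[k P0Nk]|P0_all].
    exists k => i ik; have := prime_var_or_var P0_prime (fun i j ij => J_P0 _ (JX ij)) ik.
    by case.
  by exists k0 => i _; apply: NNPP => P0Ni; apply: P0_all; exists i.
have [P1_ideal [_ P1_mul]] := P1_prime; have [_ [_ P1M]] := P1_ideal.
have [P2_ideal [P2N1 _]] := P2_prime; have [_ [P2D P2M]] := P2_ideal.
have P1_embed := ideal_embed_collapseP P1_ideal (fun i ik => P01 _ (P0X i ik)).
have P2_embed := ideal_embed_collapseP P2_ideal (fun i ik => P12 _ (P01 _ (P0X i ik))).
have collapse_x1 : collapse k x1 != 0.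
  apply: contra_notN P0Nx1 => /eqP x1_0.
  by have := sub_embed_collapse P0_prime.1 P0X x1; rewrite x1_0 rmorph0 subr0.
apply/P1Nx2/P1_embed.
apply: (@poly_prime_maximal K (fun q => P 1%N (embed k q)) (fun q => P 2%N (embed k q))
  (collapse k x1)) => //.
- by move=> x y; rewrite rmorphM => /P1_mul.
- by move=> r x; rewrite rmorphM => /P1M.
- by move=> x y; rewrite rmorphD => /P2D; apply.
- by move=> r x; rewrite rmorphM => /P2M.
- by rewrite rmorph1.
- by move=> x /P12.
- by rewrite -P1_embed.
- by rewrite -P2_embed.
Qed.

Lemma krull_dim_one : krull_dim J 1.
Proof. by split; [exact: prime_chain_one | exact: prime_chain_le1]. Qed.

End KrullDimensionOne.

Lemma card_ord_range B lo hi : (hi <= B)%N ->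
  #|[pred x : 'I_B | (lo <= x < hi)%N]| = (hi - lo)%N.
Proof.
move=> hiB; rewrite -sum1_card.
have -> : (\sum_(i in [pred x : 'I_B | lo <= x < hi]) 1
           = \sum_(0 <= i < B | lo <= i < hi) 1)%N.
  by rewrite big_mkord; apply: eq_bigl => i; rewrite inE.
rewrite -big_nat_widen //.
have [lohi|hilo] := leqP lo hi; last first.
  by rewrite big_nat_cond big1 => [|i /andP [/andP [_ ?] ?]]; lia.
rewrite (big_cat_nat (leq0n lo) lohi) /= big_nat_cond big1; last first.
  by move=> i /andP [/andP [_ ?] ?]; lia.
rewrite add0n big_mkcond (eq_big_nat _ _ (F2 := fun=> 1%N)) => [|i /andP [-> //]].
by rewrite sum_nat_const_nat muln1.
Qed.

Section CountStandardExponents.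
Variables (n : nat) (D e : 'I_n -> nat) (d : nat).
Local Notation exps := {ffun 'I_n -> 'I_d.+1}.

(* Standard for the ideal generated by the [t_i t_j^(D j)], [i < j]. *)
Definition lstandard (f : exps) :=
  [forall i : 'I_n, forall j : 'I_n, ((i < j)%N && (0 < f i)%N) ==> (f j < D j)%N].

Definition first_support (f : exps) (k : 'I_n) :=
  (0 < f k)%N && [forall j : 'I_n, (j < k)%N ==> (f j == 0%N :> nat)].

Definition exps_ge (f : exps) := [forall j : 'I_n, (e j <= f j)%N].

Definition standard_ge_first k :=
  [pred f : exps | (fdeg f == d) && lstandard f && first_support f k && exps_ge f].

Lemma sum_first_support f : (0 < fdeg f)%N -> (\sum_k (first_support f k : nat) = 1)%N.
Proof.
move=> deg_gt0; have [j fj] : exists j, (0 < f j)%N.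
  apply/existsP; apply: contraTT deg_gt0; rewrite negb_exists => /forallP f0.
  by rewrite -leqNgt leqn0 sum_nat_eq0; apply/forallP => i; have := f0 i; rewrite lt0n negbK.
case: (@arg_minnP _ j (fun i => 0 < f i)%N (fun i : 'I_n => (i : nat)) fj) => k fk kmin.
have firstk : first_support f k.
  rewrite /first_support fk; apply/forallP => i; apply/implyP => ik.
  by apply: contraTT ik; rewrite -lt0n -leqNgt => /kmin.
rewrite (bigD1 k) //= firstk big1 // => i ik; apply/eqP; rewrite eqb0.
apply/negP => /andP [fi /forallP f0_before].
case: (ltngtP i k) => [lt|gt|eq_ik]; last by move: ik; rewrite (val_inj eq_ik) eqxx.
- by have := kmin _ fi; rewrite leqNgt lt.
- by have := f0_before k; rewrite gt => /eqP f0; rewrite f0 in fk.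
Qed.

Section FixedFirstSupport.
Variable k : 'I_n.
Hypothesis e_before : forall j : 'I_n, (j < k)%N -> e j = 0%N.
Hypothesis deg_large : (\sum_j D j + e k < d)%N.

(* [f] is determined by its exponents beyond [k], which range over [window]:
   those before [k] vanish and [f k] is fixed by the degree. *)
Definition truncate (f : exps) : exps := [ffun j : 'I_n => if (k < j)%N then f j else ord0].

Definition window (j : 'I_n) :=
  [pred x : 'I_d.+1 | if (k < j)%N then (e j <= x < D j)%N else x == ord0].

Lemma truncate_inj : {in standard_ge_first k &, injective truncate}.
Proof.
move=> f g; rewrite !inE => /andP [/andP [/andP [degf _] firstf] _].
move=> /andP [/andP [/andP [degg _] firstg] _] fg.
have eq_off (j : 'I_n) : j != k -> f j = g j.
  move=> jk; case: (ltngtP k j) => [kj|jk'|eq_jk].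
  - by have := congr1 (fun h : exps => h j) fg; rewrite !ffunE kj.
  - move: firstf firstg => /andP [_ /forallP /(_ j)] + /andP [_ /forallP /(_ j)].
    by rewrite jk' => /eqP f0 /eqP g0; apply: val_inj; rewrite /= f0 g0.
  - by move: jk; rewrite (val_inj eq_jk) eqxx.
apply/ffunP => j; have [->|] := eqVneq j k; last exact: eq_off.
apply: val_inj; apply/eqP; rewrite -(eqn_add2r (\sum_(i < n | i != k) (g i : nat))).
move: degf degg; rewrite /fdeg (bigD1 k) //= (bigD1 k (P := xpredT)) //=.
rewrite (eq_bigr (fun i => (g i : nat))) => [/eqP -> /eqP -> //|i /eq_off -> //].
Qed.

Lemma truncate_in_family f : f \in standard_ge_first k -> truncate f \in family window.
Proof.
rewrite inE => /andP [/andP [/andP [_ stdf] firstf] gef]; apply/familyP => j.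
rewrite inE ffunE; case: (ltnP k j) => kj //=.
rewrite (forallP gef j) /=; move/forallP: stdf => /(_ k) /forallP /(_ j).
by rewrite kj; move: firstf => /andP [-> _].
Qed.

Lemma family_window_sub c : c \in family window ->
  exists2 f, f \in standard_ge_first k & c = truncate f.
Proof.
move=> /familyP c_window; pose T := fdeg c.
have c_le (j : 'I_n) : (c j <= D j)%N.
  by have := c_window j; rewrite inE; case: ifP => _; [case/andP => _ /ltnW | move/eqP ->].
have T_le : (T <= \sum_j D j)%N by apply: leq_sum => j _.
have T_lt : (T + e k < d)%N by apply: leq_ltn_trans deg_large; rewrite leq_add2r.
have c0 (j : 'I_n) : (j <= k)%N -> (c j : nat) = 0%N.
  by move=> jk; have := c_window j; rewrite inE ltnNge jk => /eqP ->.
pose f : exps := [ffun j => if j == k then inord (d - T) else c j].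
have fk : (f k : nat) = (d - T)%N by rewrite ffunE eqxx inordK // ltnS leq_subr.
have f_off (j : 'I_n) : j != k -> f j = c j by move=> jk; rewrite ffunE (negbTE jk).
have f_before (j : 'I_n) : (j < k)%N -> (f j : nat) = 0%N.
  by move=> jk; rewrite f_off ?c0 ?(ltnW jk) // neq_ltn jk.
exists f; last first.
  apply/ffunP => j; rewrite ffunE; case: ifP => kj; first by rewrite f_off // neq_ltn kj orbT.
  by apply: val_inj; rewrite /= c0 // leqNgt kj.
have degf : fdeg f == d.
  rewrite /fdeg (bigD1 k) //= fk (eq_bigr (fun j => (c j : nat))) => [|j /f_off -> //].
  have : T = (c k + \sum_(j | j != k) c j)%N by rewrite /T /fdeg (bigD1 k).
  by rewrite c0 // add0n => <-; apply/eqP; lia.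
have stdf : lstandard f.
  apply/forallP => i; apply/forallP => j; apply/implyP => /andP [ij fi].
  have ki : (k <= i)%N by rewrite leqNgt; apply: contraTN fi => /f_before ->.
  have kj : (k < j)%N := leq_ltn_trans ki ij.
  by have := c_window j; rewrite inE kj f_off ?neq_ltn ?kj ?orbT // => /andP [].
have firstf : first_support f k.
  rewrite /first_support fk subn_gt0 (leq_ltn_trans (leq_addr _ _) T_lt).
  by apply/forallP => j; apply/implyP => /f_before ->.
have gef : exps_ge f.
  apply/forallP => j; have [->|jk] := eqVneq j k; first by rewrite fk; lia.
  rewrite f_off //; case: (ltngtP j k) => [lt|gt|eq_jk]; first by rewrite e_before.
    by have := c_window j; rewrite inE gt => /andP [].
  by move: jk; rewrite (val_inj eq_jk) eqxx.
by rewrite inE degf stdf firstf gef.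
Qed.

Lemma card_standard_ge_first :
  #|standard_ge_first k| = (\prod_(j : 'I_n | (k < j)%N) (D j - e j))%N.
Proof.
have D_le (j : 'I_n) : (D j <= d.+1)%N.
  apply/leqW/(leq_trans _ (ltnW deg_large))/(leq_trans _ (leq_addr _ _)).
  by rewrite (bigD1 j) //= leq_addr.
rewrite -(card_in_imset truncate_inj).
have -> : #|truncate @: standard_ge_first k| = #|family window|.
  apply: eq_card => c; apply/imsetP/idP => [[f /truncate_in_family fc ->] //|].
  by case/family_window_sub => f; exists f.
rewrite card_family foldrE big_map big_enum /= big_mkcond /= [RHS]big_mkcond /=.
apply: eq_bigr => j _; case: (ltnP k j) => kj.
  by rewrite -(card_ord_range (e j) (D_le j)); apply: eq_card => x; rewrite !inE.
by rewrite (eq_card (B := pred1 ord0)) ?card1 // => x; rewrite !inE.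
Qed.

End FixedFirstSupport.

Lemma card_standard_ge : (0 < d)%N -> (forall k : 'I_n, \sum_j D j + e k < d)%N ->
  #|[pred f : exps | (fdeg f == d) && lstandard f && exps_ge f]| =
  (\sum_(k < n) (if [forall j : 'I_n, (j < k)%N ==> (e j == 0%N)]
                 then \prod_(j : 'I_n | (k < j)%N) (D j - e j) else 0))%N.
Proof.
move=> d_gt0 deg_large; rewrite -sum1_card.
rewrite (eq_bigr (fun f => \sum_(k < n) (first_support f k : nat))%N); last first.
  by move=> f /andP [/andP [/eqP degf _] _]; rewrite sum_first_support // degf.
rewrite exchange_big /=; apply: eq_bigr => k _; rewrite -big_mkcondr /= sum1dep_card.
case: ifPn => [/forallP e_before|/forallPn [j]].
  rewrite -card_standard_ge_first // => [|j jk]; last by have /implyP/(_ jk)/eqP := e_before j.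
  by apply: eq_card => f; rewrite !inE -!andbA; do !bool_congr.
rewrite negb_imply => /andP [jk ej0]; apply: eq_card0 => f; rewrite !inE.
apply/negP => /andP [/andP [_ /forallP ge] /andP [_ /forallP f_before]].
have /implyP/(_ jk)/eqP f0 := f_before j.
by move: ej0 (ge j); rewrite f0 leqn0 => /negPf ->.
Qed.

End CountStandardExponents.

Section TailProducts.
Variables (s r : nat) (d a : nat -> nat).
Hypotheses (r_gt0 : (0 < r)%N) (r_le : (r <= s)%N) (a_r : (0 < a r)%N)
  (a_before : forall i, (i < r)%N -> a i = 0%N)
  (a_after : forall i, (r < i)%N -> (i <= s)%N -> (a i <= d i - 1)%N)
  (d_gt0 : forall i, (0 < i)%N -> (i <= s)%N -> (0 < d i)%N).

(* [tailprod] with truncated subtraction on [nat]; the two agree unless [a_r > d_r]. *)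
Definition tailprodn i := (\prod_(i <= j < s.+1) (d j - a j))%N.

Lemma tailprodnE i : (0 < i)%N -> (a r <= d r)%N \/ (r < i)%N ->
  (tailprodn i)%:R = tailprod s d a i.
Proof.
move=> i_gt0 ar_le; rewrite /tailprodn /tailprod natr_prod big_nat [RHS]big_nat.
apply: eq_bigr => j /andP [ij js]; rewrite natrB //.
case: (ltngtP j r) => [jr|rj|jr]; first by rewrite a_before.
  by have := a_after rj js; have := d_gt0 (leq_ltn_trans (leq0n _) rj) js; lia.
by case: ar_le => [|ri]; [rewrite jr | lia].
Qed.

Lemma tailprodn_eq0 i : (d r < a r)%N -> (i <= r)%N -> tailprodn i = 0%N.
Proof.
move=> dr_lt ir; rewrite /tailprodn (@big_cat_nat _ _ _ r) ?leqW //=.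
by rewrite [X in (_ * X)%N]big_ltn ?ltnS // (_ : d r - a r = 0)%N ?mul0n ?muln0 //; lia.
Qed.

Lemma sum_first_support_terms :
  (\sum_(k < s) (if [forall j : 'I_s, (j < k)%N ==> (a j.+1 == 0%N)]
                 then \prod_(j : 'I_s | (k < j)%N) (d j.+1 - a j.+1) else 0))%N
  = (\sum_(2 <= i < r.+2) tailprodn i)%N.
Proof.
have term (k : 'I_s) : [forall j : 'I_s, (j < k)%N ==> (a j.+1 == 0%N)] = (k < r)%N.
  case: (ltnP k r) => kr.
    by apply/forallP => j; apply/implyP => jk; rewrite a_before //; lia.
  have r1 : (r.-1 < s)%N by lia.
  apply/negbTE/negP => /forallP /(_ (Ordinal r1)) /implyP /=.
  by rewrite prednK // => /(_ kr) /eqP; lia.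
rewrite (eq_bigr (fun k : 'I_s => if (k < r)%N then tailprodn k.+2 else 0%N)); last first.
  move=> k _; rewrite term; case: ifP => // _.
  by rewrite /tailprodn big_add1 /= big_geq_mkord; apply: eq_bigl.
rewrite -big_mkcond /= -(big_mkord (fun k => k < r)%N (fun k => tailprodn k.+2)).
have -> : (\sum_(0 <= k < s | (k < r)%N) tailprodn k.+2 = \sum_(0 <= k < r) tailprodn k.+2)%N.
  by rewrite (big_nat_widen _ _ _ _ _ r_le).
rewrite -[2%N]/(0 + 2)%N big_addn subn2 /=.
by apply: eq_bigr => i _; rewrite addn2.
Qed.

Lemma sum_tailprodnE :
  (\sum_(2 <= i < r.+2) tailprodn i)%:R =
  (if r == s then
     (if (a s <= d s)%N then \sum_(2 <= i < s.+1) tailprod s d a i + 1 else 1)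
   else
     (if (a r <= d r)%N then \sum_(2 <= i < r.+2) tailprod s d a i
      else tailprod s d a r.+1)) :> rat.
Proof.
have sum_untrunc m : (a r <= d r)%N -> (m <= r.+2)%N ->
    (\sum_(2 <= i < m) tailprodn i)%:R = \sum_(2 <= i < m) tailprod s d a i :> rat.
  move=> ar_le m_le; rewrite natr_sum; apply: eq_big_nat => i /andP [i2 _].
  by apply: tailprodnE; [lia | left].
have sum_trunc : (d r < a r)%N -> (\sum_(2 <= i < r.+1) tailprodn i = 0)%N.
  by move=> dr_lt; rewrite big_nat big1 // => i /andP [_ ir]; apply: tailprodn_eq0.
rewrite (@big_nat_recr _ _ _ r.+1 2 _ r_gt0) natrD /=.
have tail_top : r = s -> tailprodn r.+1 = 1%N by move=> rs; rewrite /tailprodn rs big_geq.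
have [ar_le|dr_lt] := leqP (a r) (d r).
  rewrite sum_untrunc //; have [rs|rs] := eqVneq r s.
    by rewrite tail_top // -rs ar_le.
  rewrite tailprodnE //; last by right.
  by rewrite (@big_nat_recr _ _ _ r.+1 2 _ r_gt0).
rewrite sum_trunc // add0r; have [rs|rs] := eqVneq r s.
  by rewrite tail_top // -rs leqNgt dr_lt.
by rewrite tailprodnE //; right.
Qed.

End TailProducts.

Lemma is_degree_dim1 (K : fieldType) n (J : {mpoly K[n]} -> Prop) (H : nat -> nat) N
    (c : rat) :
  krull_dim J 1 -> (forall dd, hilbert_value J dd (H dd)) ->
  (forall dd, (N <= dd)%N -> (H dd)%:R = c) -> is_degree J c.
Proof.
move=> dimJ HJ H_const; exists 1%N, H; do 2!split=> //.
by move=> eps eps_gt0; exists N => dd Ndd; rewrite H_const // expr0 !divr1 subrr normr0.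
Qed.

Section MonomialIdealL.
Variables (K : fieldType) (s : nat) (d a : nat -> nat) (r : nat).
Hypotheses (s_ge2 : (2 <= s)%N)
  (d_gt0 : forall i, (0 < i)%N -> (i <= s)%N -> (0 < d i)%N)
  (r_gt0 : (0 < r)%N) (r_le : (r <= s)%N) (a_r : (0 < a r)%N)
  (a_before : forall i, (i < r)%N -> a i = 0%N)
  (tNL : ~ ideal_gen (Lgens K s d) (monoA K s a)).

Local Notation L := (ideal_gen (Lgens K s d)).
Local Notation La := (ideal_gen (fun g => Lgens K s d g \/ g = monoA K s a)).

(* Variables and exponents are shifted to 0-based indices. *)
Definition d0 (j : 'I_s) := d j.+1.
Definition a0 (j : 'I_s) := a j.+1.
Definition mnm_a : 'X_{1..s} := [multinom a i.+1 | i < s].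

Definition in_L : pred 'X_{1..s} := fun m =>
  [exists i : 'I_s, exists j : 'I_s, [&& (i < j)%N, (0 < m i)%N & (d0 j <= m j)%N]].
Definition in_La : pred 'X_{1..s} := fun m => in_L m || (mnm_a <= m)%MM.

Lemma Lgens_mnm (i j : 'I_s) :
  ('X_i * 'X_j ^+ d j.+1 : {mpoly K[s]}) = 'X_[U_(i) + U_(j) *+ d0 j].
Proof. by rewrite mpolyXD mpolyXn. Qed.

Lemma in_L_gen (i j : 'I_s) : (i < j)%N -> in_L (U_(i) + U_(j) *+ d0 j)%MM.
Proof.
move=> ij; apply/existsP; exists i; apply/existsP; exists j.
by rewrite ij !mnmDE !mulmnE !mnm1E !eqxx mul1n leq_addl.
Qed.

Lemma in_L_up m m' : in_L m -> (m <= m')%MM -> in_L m'.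
Proof.
move=> /existsP [i /existsP [j /and3P [ij mi mj]]] /mnm_lepP le.
apply/existsP; exists i; apply/existsP; exists j.
by rewrite ij (leq_trans mi (le i)) (leq_trans mj (le j)).
Qed.

Lemma in_L_mem m : in_L m -> L 'X_[m].
Proof.
move=> /existsP [i /existsP [j /and3P [ij mi mj]]].
have ge_gen : (U_(i) + U_(j) *+ d0 j <= m)%MM.
  apply/mnm_lepP => l; rewrite !mnmDE mulmnE !mnm1E.
  have [<-|il] := eqVneq i l.
    by rewrite (_ : j == i = false) ?mul0n ?addn0 // -val_eqE /= gtn_eqF.
  by have [<-|jl] := eqVneq j l; rewrite ?mul1n ?add0n ?mul0n.
rewrite -(submK ge_gen) mpolyXD; apply/ideal_genMl/mem_ideal_gen.
by exists i, j; rewrite Lgens_mnm.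
Qed.

Lemma memL p : L p <-> {in msupp p, forall m, in_L m}.
Proof.
apply: ideal_gen_monomialP; [|exact: in_L_up|exact: in_L_mem].
move=> g [i [j [ij ->]]]; exists (U_(i) + U_(j) *+ d0 j)%MM.
by rewrite Lgens_mnm in_L_gen.
Qed.

Lemma memLa p : La p <-> {in msupp p, forall m, in_La m}.
Proof.
apply: ideal_gen_monomialP.
- move=> g [[i [j [ij ->]]]|->]; last by exists mnm_a; rewrite /in_La lepm_refl orbT.
  by exists (U_(i) + U_(j) *+ d0 j)%MM; rewrite Lgens_mnm /in_La in_L_gen.
- move=> m m' /orP [Lm|am] le; apply/orP.
    by left; apply: in_L_up Lm le.
  by right; apply: lepm_trans am le.
- move=> m /orP [/in_L_mem|am]; first by apply: ideal_gen_sub => g; left.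
  by rewrite -(submK am) mpolyXD; apply/ideal_genMl/mem_ideal_gen; right.
Qed.

Lemma a_le_pred_d i : (r < i)%N -> (i <= s)%N -> (a i <= d i - 1)%N.
Proof.
move=> ri i_le; have d_i := d_gt0 (leq_ltn_trans (leq0n _) ri) i_le.
have [|di_le] := ltnP (a i) (d i); first lia.
case: tNL.
have r1 : (r.-1 < s)%N by lia.
have i1 : (i.-1 < s)%N by lia.
apply: in_L_mem; apply/existsP; exists (Ordinal r1); apply/existsP; exists (Ordinal i1).
by rewrite /d0 /mnm_a !mnmE /= !prednK //; [apply/and3P; split=> //; lia | lia].
Qed.

(* The variable that survives modulo [L] and [t^a]: [t_s] when [r < s], and
   [t_1] when [r = s], since [t_1] then divides neither [t^a] nor any
   generator of [L]. *)
Definition k0_val := if r == s then 0%N else s.-1.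

Lemma k0_lt : (k0_val < s)%N.
Proof. by rewrite /k0_val; case: ifP => _; lia. Qed.

Definition k0 : 'I_s := Ordinal k0_lt.

Lemma gens_collapse g : Lgens K s d g \/ g = monoA K s a -> collapse k0 g = 0.
Proof.
have r1 : (r.-1 < s)%N by lia.
case=> [[i [j [ij ->]]]|->]; last first.
  apply: (@collapseX_eq0 _ _ _ _ (Ordinal r1)); last by rewrite /= mnmE prednK.
  by rewrite -val_eqE /= /k0_val; case: ifP => /eqP ?; apply/eqP; lia.
rewrite Lgens_mnm; have [rs|rs] := eqVneq r s.
  apply: (@collapseX_eq0 _ _ _ _ j).
    by rewrite -val_eqE /= /k0_val rs eqxx; apply: contraTneq ij => ->.
  by rewrite mnmDE mulmnE !mnm1E eqxx mul1n addn_gt0 orbC (d_gt0 _ (ltn_ord j)).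
apply: (@collapseX_eq0 _ _ _ _ i); last by rewrite mnmDE mulmnE !mnm1E eqxx.
by rewrite -val_eqE /= /k0_val (negbTE rs); have := ltn_ord j; lia.
Qed.

Lemma krull_dim_L : krull_dim L 1.
Proof.
apply: (krull_dim_one (D := d0) (k0 := k0)) => [i j ij|p].
  by apply: mem_ideal_gen; exists i, j.
by apply: collapse_ideal_gen => g Lg; apply: gens_collapse; left.
Qed.

Lemma krull_dim_La : krull_dim La 1.
Proof.
apply: (krull_dim_one (D := d0) (k0 := k0)) => [i j ij|p].
  by apply: mem_ideal_gen; left; exists i, j.
exact/collapse_ideal_gen/gens_collapse.
Qed.

Lemma standard_in_L dd (f : {ffun 'I_s -> 'I_dd.+1}) :
  ~~ in_L (mnm_of_ffun f) = lstandard d0 f.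
Proof.
rewrite /in_L negb_exists; apply: eq_forallb => i; rewrite negb_exists; apply: eq_forallb => j.
by rewrite !mnmE; case: (i < j)%N; case: (0 < f i)%N => //=; case: leqP.
Qed.

Lemma mnm_a_le dd (f : {ffun 'I_s -> 'I_dd.+1}) :
  (mnm_a <= mnm_of_ffun f)%MM = exps_ge a0 f.
Proof. by apply/mnm_lepP/forallP => le j; have := le j; rewrite /mnm_a !mnmE. Qed.

(* Beyond this degree the Hilbert functions of [S/L] and [S/(L, t^a)] are constant. *)
Definition stable_deg := (\sum_j d0 j + \sum_j a0 j).+1.

Lemma card_standard_L dd : (stable_deg <= dd)%N ->
  #|standard_exps in_L dd| = (\sum_(k < s) \prod_(j : 'I_s | (k < j)%N) d0 j)%N.
Proof.
move=> dd_ge; have dd_gt0 : (0 < dd)%N by apply: leq_trans dd_ge.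
have deg_large (k : 'I_s) : (\sum_j d0 j + 0 < dd)%N.
  by apply: leq_trans dd_ge; rewrite ltnS addn0 leq_addr.
rewrite (eq_bigr (fun k : 'I_s => if [forall j : 'I_s, (j < k)%N ==> (0 == 0)%N]
    then \prod_(j : 'I_s | (k < j)%N) (d0 j - 0) else 0)%N) => [|k _]; last first.
  rewrite (_ : [forall _, _] = true); last by apply/forallP => j; rewrite implybT.
  by apply: eq_bigr => j _; rewrite subn0.
rewrite -(card_standard_ge dd_gt0 deg_large); apply: eq_card => f; rewrite !inE standard_in_L.
by rewrite (_ : exps_ge _ f = true) ?andbT //; apply/forallP.
Qed.

Lemma card_standard_La dd : (stable_deg <= dd)%N ->
  (#|standard_exps in_La dd| + \sum_(2 <= i < r.+2) tailprodn s d a i)%N =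
  (\sum_(k < s) \prod_(j : 'I_s | (k < j)%N) d0 j)%N.
Proof.
move=> dd_ge; have dd_gt0 : (0 < dd)%N by apply: leq_trans dd_ge.
have deg_large (k : 'I_s) : (\sum_j d0 j + a0 k < dd)%N.
  by apply: leq_trans dd_ge; rewrite ltnS leq_add2l (bigD1 k) //= leq_addr.
rewrite -(card_standard_L dd_ge) -(sum_first_support_terms d r_gt0 r_le a_r a_before).
rewrite -(card_standard_ge dd_gt0 deg_large) addnC -[in RHS](cardID [pred f | exps_ge a0 f]).
congr (_ + _); apply: eq_card => f; rewrite !inE standard_in_L.
  by rewrite andbC andbA.
rewrite /in_La negb_or standard_in_L mnm_a_le.
by case: (fdeg f == dd); case: (lstandard d0 f); case: (exps_ge a0 f).
Qed.

End MonomialIdealL.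

Unset Implicit Arguments.

Theorem proposition5p3 (K : fieldType) (s : nat) (d a : nat -> nat) (r : nat) :
  (2 <= s)%N ->
  (forall i j, (1 <= i)%N -> (i <= j)%N -> (j <= s)%N -> (d i <= d j)%N) ->
  (forall i, (1 <= i)%N -> (i <= s)%N -> (0 < d i)%N) ->
  (2 <= d 1)%N ->
  (1 <= r)%N -> (r <= s)%N -> (1 <= a r)%N ->
  (forall i, (i < r)%N -> a i = 0%N) ->
  ~ ideal_gen (Lgens K s d) (monoA K s a) ->
  (forall i, (r < i)%N -> (i <= s)%N -> (a i <= d i - 1)%N) /\
  exists eL : rat,
    is_degree (ideal_gen (Lgens K s d)) eL /\
    is_degree (ideal_gen (fun g => Lgens K s d g \/ g = monoA K s a))
      (eL - (if r == s then
               (if (a s <= d s)%N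
                then \sum_(2 <= i < s.+1) tailprod s d a i + 1
                else 1)
             else
               (if (a r <= d r)%N
                then \sum_(2 <= i < r.+2) tailprod s d a i
                else tailprod s d a r.+1))).
Proof.
move=> s_ge2 _ d_gt0 _ r_gt0 r_le a_r a_before tNL.
have a_le := a_le_pred_d s_ge2 d_gt0 r_gt0 r_le a_r tNL.
have dimL := krull_dim_L K s_ge2 d_gt0 r_gt0 r_le a_r.
have dimLa := krull_dim_La K s_ge2 d_gt0 r_gt0 r_le a_r.
split=> //; exists (\sum_(k < s) \prod_(j : 'I_s | (k < j)%N) d0 d j)%N%:R; split.
  apply: (is_degree_dim1 dimL (hilbert_value_standard (memL d)) (N := stable_deg s d a)).
  by move=> dd /card_standard_L ->.
apply: (is_degree_dim1 dimLa (hilbert_value_standard (memLa d a)) (N := stable_deg s d a)).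
move=> dd dd_ge.
rewrite -(sum_tailprodnE r_gt0 r_le a_r a_before a_le d_gt0).
by rewrite -(card_standard_La r_gt0 r_le a_r a_before dd_ge) natrD addrK.
Qed.
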